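(* Consider the algorithm described in the context (with parameters $p\in[0,1]$, $l\in\mathbb{N}$) run on a stream consistent with a representation of size $m$ with at most $k$ exceptions, in which each component has a unique label. Let $t$ be some iteration of the run, let $C[x]$ be some valid rule that exists during this iteration, and let $U(x)$ be the value of its update counter at the end of this iteration. Then the number of exceptions that caused updates to this rule until the end of iteration $t$ is at least $(U(x)-(m-1))/2$.
   Context: Setting. $\mathcal{X}$ is a domain, $\mathcal{Y}$ a finite label set, $\Phi$ a set of binary features on $\mathcal{X}$ closed under negation. A representation of size $m$ is a cover $\mathcal{G}=\{G_1,\dots,G_m\}$ of $\mathcal{X}$ by components with labels $\ell(G)$; each $x$ has a fixed component $G(x)\ni x$; $c^*(x)=\ell(G(x))$; for components $G_i,G_j$ with different labels there is $\phi(G_i,G_j)\in\Phi$ true on all of $G_i$ and false on all of $G_j$, with $\phi(G_j,G_i)=\neg\phi(G_i,G_j)$. Protocol: the learner first gets $x_0$ with label $y_0$; then each example $x_t$ arrives, the learner predicts a label with an explanation example previously seen with that label; on a mistake the teacher gives $y_t=c^*(x_t)$ and a feature $\phi(G(x_t),G(\hat x_t))$, $\hat x_t$ the explanation. An exception is an example on which the feedback is inconsistent with the representation/protocol; at most $k$ examples are exceptions. Non-exception examples are valid; a rule $C[x]$ is valid if $x$ is valid. Algorithm (parameters $p,l$; also uses $m$): receives $(x_0,y_0)$; maintains a list $L$ of rules, each indexed by a representative $x$, with a conjunction $C[x]$ of features, a label $\texttt{label}[x]$, and an update counter $U(x)$. On $x_t$: (a) If some $C[\hat x]\in L$ is satisfied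 by $x_t$, predict $\texttt{label}[\hat x]$ with explanation $\hat x$; if incorrect, receive $y_t$ and feature $\phi_t$; if $\hat x$ satisfies $\neg\phi_t$ and $x_t$ satisfies $\phi_t$, add $\neg\phi_t$ to $C[\hat x]$ (otherwise the conjunction is unchanged); in either case set $U(\hat x)\leftarrow U(\hat x)+1$ and delete the rule if $U(\hat x)\ge m+l-1$. (b) Otherwise, predict $y_0$ with explanation $x_0$; if incorrect, receive $y_t$ and $\phi$; if no rule in $L$ has label $y_t$, draw an independent bit $B$ with success probability $p$ and, if $B=1$, add a new rule with empty conjunction $C[x_t]$, $\texttt{label}[x_t]=y_t$, $U(x_t)=0$; else let $C[\hat x]$ be the rule in $L$ with label $y_t$, remove from $C[\hat x]$ some feature not satisfied by $x_t$, set $U(\hat x)\leftarrow U(\hat x)+1$, and delete the rule if $U(\hat x)\ge m+l-1$. An example ''causes an update'' to a rule if processing it increments that rule's counter $U$. *)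

From mathcomp Require Import all_boot all_order all_algebra.
Set Implicit Arguments.
Unset Strict Implicit.
Unset Printing Implicit Defensive.

(* Time indices: example x_0 (with label y_0) is the initial example; the   *)
(* iterations are t = 1, 2, ...  and iteration t processes x_t.            *)
(* A rule is identified by the time index r of its representative x_r.     *)
(* Deleted rules are kept in the state with alive = false (bookkeeping     *)
(* only; they are never used again by the algorithm).                      *)

Section Rules.
Variables (F : eqType) (Y : finType).

(* rule = (representative index, conjunction C, label, update counter U, alive) *)
Definition rule := (nat * seq F * Y * nat * bool)%type.
Definition mkRule (r : nat) (C : seq F) (a : Y) (u : nat) (al : bool) : rule :=
  (r, C, a, u, al).
Definition rep (R : rule) : nat := R.1.1.1.1.
Definition conj (R : rule) : seq F := R.1.1.1.2.
Definition rlab (R : rule) : Y := R.1.1.2.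
Definition cnt (R : rule) : nat := R.1.2.
Definition alive (R : rule) : bool := R.2.

(* what happened in an iteration: predicted label, index of the explanation
   example (0 = x_0), and the rule whose counter was incremented, if any *)
Record event := Event { pred : Y; expl : nat; upd : option nat }.
End Rules.

Section Alg.
Variables (X : Type) (Y : finType) (F : eqType) (eval : F -> X -> bool)
  (neg : F -> F).
(* K = m + l - 1 : deletion threshold *)
Variable K : nat.
(* the stream: examples, teacher labels, teacher features, random bits *)
Variables (x : nat -> X) (y : nat -> Y) (ph : nat -> F) (b : nat -> bool).

Definition sat (R : rule F Y) (z : X) : bool := all (fun f => eval f z) (conj R).

Definition bump (R : rule F Y) (C : seq F) : rule F Y :=
  mkRule (rep R) C (rlab R) (cnt R).+1 (~~ (K <= (cnt R).+1)).

Definition upd_rule (r : nat) (g : rule F Y -> rule F Y) (L : seq (rule F Y)) :=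
  map (fun R => if rep R == r then g R else R) L.

Definition no_sat (L : seq (rule F Y)) (z : X) : Prop :=
  forall R, R \in L -> alive R -> ~~ sat R z.

(* one iteration t of the algorithm (nondeterministic choices allowed) *)
Inductive step (t : nat) (L : seq (rule F Y)) : seq (rule F Y) -> event Y -> Prop :=
| StepA_correct R :
    R \in L -> alive R -> sat R (x t) -> rlab R = y t ->
    step t L L (Event (rlab R) (rep R) None)
| StepA_mistake R :
    R \in L -> alive R -> sat R (x t) -> rlab R <> y t ->
    step t L
      (upd_rule (rep R)
         (fun R0 => bump R0
            (if eval (neg (ph t)) (x (rep R)) && eval (ph t) (x t)
             then neg (ph t) :: conj R0 else conj R0)) L)
      (Event (rlab R) (rep R) (Some (rep R)))
| StepB_correct :
    no_sat L (x t) -> y 0 = y t ->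
    step t L L (Event (y 0) 0 None)
| StepB_new :
    no_sat L (x t) -> y 0 <> y t ->
    (forall R, R \in L -> alive R -> rlab R <> y t) ->
    step t L (if b t then rcons L (mkRule t [::] (y t) 0 true) else L)
      (Event (y 0) 0 None)
| StepB_remove R f :
    no_sat L (x t) -> y 0 <> y t ->
    R \in L -> alive R -> rlab R = y t ->
    f \in conj R -> ~~ eval f (x t) ->
    step t L (upd_rule (rep R) (fun R0 => bump R0 (rem f (conj R0))) L)
      (Event (y 0) 0 (Some (rep R))).

(* L t = list of rules at the end of iteration t (L 0 = state after x_0) *)
Definition is_run (L : nat -> seq (rule F Y)) (ev : nat -> event Y) : Prop :=
  L 0 = [::] /\ forall t, 0 < t -> step t (L t.-1) (L t) (ev t).

(* validity of example s w.r.t. a representation with target cstar and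
   separating features phiG i j (i, j components) and component map G *)
Variables (m : nat) (G : X -> 'I_m) (lab : 'I_m -> Y)
  (phi : 'I_m -> 'I_m -> F).

Definition cstar (z : X) : Y := lab (G z).

Definition valid (ev : nat -> event Y) (s : nat) : bool :=
  if s == 0 then y 0 == cstar (x 0)
  else (y s == cstar (x s)) &&
       ((pred (ev s) != y s) ==> (ph s == phi (G (x s)) (G (x (expl (ev s)))))).

Definition exc_updates (ev : nat -> event Y) (r t : nat) : nat :=
  count (fun s => ~~ valid ev s && (upd (ev s) == Some r)) (iota 1 t).

End Alg.

From mathcomp Require Import all_boot all_order all_algebra zify lra.
Set Implicit Arguments.
Unset Strict Implicit.
Unset Printing Implicit Defensive.

(* Let gr be the component of x_r and call a feature separating if it is
   neg (phi j gr) for a component j with another label: these are the features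
   a correct teacher returns when C[x_r] errs, they all hold on gr, and there
   are at most m - 1 of them.  A valid mistake adds a new separating feature to
   C[x_r]; a valid update in step (b) comes from an example of gr (labels are
   unique), so it removes a non-separating feature.  Thus every valid update
   lowers (#non-separating - #distinct separating features) by one, while an
   exception raises it by at most one.  Hence U + #non-separating
   <= #separating + 2 (number of exceptions) < m + 2 (number of exceptions). *)

Lemma uniq_map_inj_in (T1 T2 : eqType) (f : T1 -> T2) (s : seq T1) :
  uniq (map f s) -> {in s &, injective f}.
Proof.
elim: s => //= a s IH /andP [fa_notin uniq_s] u v.
rewrite !inE => /orP [/eqP-> | us] /orP [/eqP-> | vs] // euv.
- by case/negP: fa_notin; rewrite euv map_f.
- by case/negP: fa_notin; rewrite -euv map_f.
- exact: IH.
Qed.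

Section DistinctCount.
Variables (T : eqType) (P : T -> bool).

Definition ucount (s : seq T) : nat := size (undup (filter P s)).

Lemma ucount_cons f s : ucount s <= ucount (f :: s).
Proof. by rewrite /ucount /=; case: (P f) => //=; case: ifP. Qed.

Lemma ucount_cons_notin f s : P f -> f \notin s -> ucount (f :: s) = (ucount s).+1.
Proof. by rewrite /ucount /= => -> f_notin /=; rewrite mem_filter (negbTE f_notin) andbF. Qed.

Lemma ucount_rem f s : ucount s <= (ucount (rem f s)).+1.
Proof.
apply: (@uniq_leq_size _ _ (f :: undup (filter P (rem f s)))); first exact: undup_uniq.
move=> g; rewrite mem_undup mem_filter => /andP [Pg gs].
rewrite inE mem_undup mem_filter Pg /=.
by case: (eqVneq g f) => //= /rem_mem ->.
Qed.

Lemma ucount_rem_predC f s : ~~ P f -> ucount (rem f s) = ucount s.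
Proof.
move=> nPf; congr (size (undup _)).
by elim: s => //= g s IH; case: (eqVneq g f) => [->|_] /=; rewrite ?(negbTE nPf) ?IH.
Qed.

Lemma ucount_le_size s s' : (forall f, P f -> f \in s') -> ucount s <= size s'.
Proof.
move=> Ps'; apply: uniq_leq_size; first exact: undup_uniq.
by move=> g; rewrite mem_undup mem_filter => /andP [/Ps'].
Qed.

Lemma count_ucount_cons f s :
  count (predC P) (f :: s) + ucount s <= count (predC P) s + ucount (f :: s) + 1.
Proof. have := ucount_cons f s; rewrite /= -/(nat_of_bool _); case: (P f) => /=; lia. Qed.

Lemma count_ucount_rem f s :
  count (predC P) (rem f s) + ucount s <= count (predC P) s + ucount (rem f s) + 1.
Proof. have := ucount_rem f s; rewrite count_rem; lia. Qed.

End DistinctCount.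

Lemma upd_rule_ind (F : eqType) (Y : finType) (P : rule F Y -> Prop) q g L :
  {in L, forall R, rep R != q -> P R} -> {in L, forall R, rep R = q -> P (g R)} ->
  {in upd_rule q g L, forall R, P R}.
Proof.
move=> Pold Pnew _ /mapP [R R_in ->].
by case: (eqVneq (rep R) q) => [/Pnew|/Pold]; apply.
Qed.

Lemma map_rep_upd_rule (F : eqType) (Y : finType) q g (L : seq (rule F Y)) :
  (forall R, rep (g R) = rep R) -> map (@rep F Y) (upd_rule q g L) = map (@rep F Y) L.
Proof. by move=> rep_g; rewrite -map_comp; apply: eq_map => R /=; case: ifP. Qed.

Lemma cnt_bump (Y : finType) (F : eqType) K (R : rule F Y) C : cnt (bump K R C) = (cnt R).+1.
Proof. by []. Qed.

Lemma conj_bump (Y : finType) (F : eqType) K (R : rule F Y) C : conj (bump K R C) = C.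
Proof. by []. Qed.

Lemma exc_updates_succ (X : Type) (Y : finType) (F : eqType) (x : nat -> X)
    (y : nat -> Y) (ph : nat -> F) (m : nat) (G : X -> 'I_m) (lab : 'I_m -> Y)
    (phi : 'I_m -> 'I_m -> F) (ev : nat -> event Y) (r s : nat) :
  exc_updates x y ph G lab phi ev r s.+1 =
  exc_updates x y ph G lab phi ev r s
  + (~~ valid x y ph G lab phi ev s.+1 && (upd (ev s.+1) == Some r)).
Proof. by rewrite /exc_updates -[s.+1]addn1 iotaD count_cat /= add1n addn0 addn1. Qed.

Lemma valid_label (X : Type) (Y : finType) (F : eqType) (x : nat -> X)
    (y : nat -> Y) (ph : nat -> F) (m : nat) (G : X -> 'I_m) (lab : 'I_m -> Y)
    (phi : 'I_m -> 'I_m -> F) (ev : nat -> event Y) (s : nat) :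
  valid x y ph G lab phi ev s -> y s = lab (G (x s)).
Proof. by rewrite /valid; case: eqP => [->|_] => [/eqP|/andP [/eqP]]. Qed.

Section Run.
Variables (X : Type) (Y : finType) (F : eqType) (eval : F -> X -> bool) (neg : F -> F).
Variables (K : nat) (x : nat -> X) (y : nat -> Y) (ph : nat -> F) (b : nat -> bool).
Variables (L : nat -> seq (rule F Y)) (ev : nat -> event Y).
Hypothesis run : is_run eval neg K x y ph b L ev.

Lemma run_step s : step eval neg K x y ph b s.+1 (L s) (L s.+1) (ev s.+1).
Proof. by case: run => _; apply. Qed.

Lemma run_wf s :
  [/\ {in L s, forall R, rlab R = y (rep R)}, {in L s, forall R, rep R <= s}
    & uniq (map (@rep F Y) (L s))].
Proof.
elim: s => [|s [lab_rep rep_le uniq_rep]]; first by case: run => ->.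
have rep_le' : {in L s, forall R, rep R <= s.+1} by move=> R /rep_le /leqW.
have wf_upd q g : (forall R, rep (g R) = rep R /\ rlab (g R) = rlab R) ->
    [/\ {in upd_rule q g (L s), forall R, rlab R = y (rep R)},
      {in upd_rule q g (L s), forall R, rep R <= s.+1}
      & uniq (map (@rep F Y) (upd_rule q g (L s)))].
  move=> g_id; split; last by rewrite map_rep_upd_rule // => R; case: (g_id R).
  - by apply: upd_rule_ind => R /lab_rep ? _ //; case: (g_id R) => -> ->.
  - by apply: upd_rule_ind => R /rep_le' ? _ //; case: (g_id R) => ->.
case: (run_step s) => [R0 _ _ _ _|R0 _ _ _ _|_ _|_ _ _|R0 f _ _ _ _ _ _ _];
  try by split.
- exact: wf_upd.
- case: (b s.+1); last by split.
  split.
  + by move=> R; rewrite mem_rcons inE => /predU1P [->|/lab_rep].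
  + by move=> R; rewrite mem_rcons inE => /predU1P [->|/rep_le'].
  + rewrite map_rcons rcons_uniq uniq_rep andbT.
    by apply/mapP => -[R /rep_le + eq_rep]; rewrite -eq_rep ltnn.
- exact: wf_upd.
Qed.
End Run.

Section CounterBound.
Variables (X : Type) (Y : finType) (F : eqType) (eval : F -> X -> bool) (neg : F -> F).
Hypothesis neg_eval : forall f z, eval (neg f) z = ~~ eval f z.
Variables (K : nat) (x : nat -> X) (y : nat -> Y) (ph : nat -> F) (b : nat -> bool).
Variables (L : nat -> seq (rule F Y)) (ev : nat -> event Y).
Hypothesis run : is_run eval neg K x y ph b L ev.
Variables (m : nat) (memG : 'I_m -> X -> bool) (G : X -> 'I_m) (lab : 'I_m -> Y)
  (phi : 'I_m -> 'I_m -> F).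
Hypothesis G_mem : forall z, memG (G z) z.
Hypothesis phi_true : forall i j, lab i != lab j -> forall z, memG i z -> eval (phi i j) z.
Hypothesis phi_false :
  forall i j, lab i != lab j -> forall z, memG j z -> ~~ eval (phi i j) z.
Hypothesis lab_inj : injective lab.
Variable r : nat.
Hypothesis r_valid : valid x y ph G lab phi ev r.

Local Notation valid_at := (valid x y ph G lab phi ev).
Local Notation E := (exc_updates x y ph G lab phi ev r).
Let gr := G (x r).

Definition separating (f : F) : bool :=
  [exists j, (lab j != lab gr) && (f == neg (phi j gr))].

Lemma label_r : y r = lab gr.
Proof. exact: valid_label r_valid. Qed.

Lemma separating_eval f z : separating f -> G z = gr -> eval f z.
Proof.
case/existsP=> j /andP [lab_j /eqP->] Gz.
by rewrite neg_eval; apply: phi_false; rewrite // -Gz.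
Qed.

Lemma ucount_separating_lt C : ucount separating C < m.
Proof.
pose others := [pred j | lab j != lab gr].
apply: (@leq_ltn_trans #|others|).
  rewrite cardE -(size_map (fun j => neg (phi j gr))); apply: ucount_le_size.
  by move=> f /existsP [j /andP [lab_j /eqP->]]; rewrite map_f // mem_enum.
have : #|others| <= #|predC1 gr|.
  by apply: subset_leq_card; apply/subsetP => j; apply: contraNneq => ->.
have m_pos : 0 < m := leq_ltn_trans (leq0n gr) (ltn_ord gr).
by rewrite cardC1 card_ord; lia.
Qed.

Definition counter_bound (s : nat) (R : rule F Y) : Prop :=
  cnt R + count (predC separating) (conj R) <= ucount separating (conj R) + 2 * E s.

Lemma counter_bound_succ s R : counter_bound s R -> counter_bound s.+1 R.
Proof. by rewrite /counter_bound exc_updates_succ; lia. Qed.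

Lemma counter_bound_bump_valid s R C :
  valid_at s.+1 -> counter_bound s R ->
  count (predC separating) C + ucount separating (conj R)
    < count (predC separating) (conj R) + ucount separating C ->
  counter_bound s.+1 (bump K R C).
Proof. by move=> v; rewrite /counter_bound exc_updates_succ cnt_bump conj_bump v; lia. Qed.

Lemma counter_bound_bump_exception s R C :
  ~~ valid_at s.+1 -> upd (ev s.+1) = Some r -> counter_bound s R ->
  count (predC separating) C + ucount separating (conj R)
    <= count (predC separating) (conj R) + ucount separating C + 1 ->
  counter_bound s.+1 (bump K R C).
Proof.
move=> nv upd_r; rewrite /counter_bound exc_updates_succ cnt_bump conj_bump nv upd_r eqxx.
lia.
Qed.

Lemma valid_mistake_separating s :
  valid_at s.+1 -> pred (ev s.+1) = y r -> pred (ev s.+1) != y s.+1 ->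
  expl (ev s.+1) = r ->
  [/\ separating (neg (ph s.+1)), eval (neg (ph s.+1)) (x r) & eval (ph s.+1) (x s.+1)].
Proof.
move=> + pred_r pred_ne expl_r; rewrite /valid /= pred_ne expl_r.
case/andP=> /eqP; rewrite /cstar => y_s /eqP ph_s.
have lab_ne : lab (G (x s.+1)) != lab gr by rewrite -y_s -label_r -pred_r eq_sym.
have sep : separating (neg (ph s.+1)).
  by apply/existsP; exists (G (x s.+1)); rewrite lab_ne ph_s eqxx.
split=> //; first exact: separating_eval.
by rewrite ph_s; apply: phi_true.
Qed.

Lemma valid_removal_not_separating s f :
  valid_at s.+1 -> y s.+1 = y r -> ~~ eval f (x s.+1) -> ~~ separating f.
Proof.
move=> /valid_label y_s y_r; apply: contra => sep_f; apply: separating_eval => //.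
by apply: lab_inj; rewrite -y_s y_r label_r.
Qed.

Lemma counter_bound_upd_rule s R0 g :
  {in L s, forall R, rep R = r -> counter_bound s R} -> R0 \in L s ->
  (forall R, rep (g R) = rep R) -> (rep R0 = r -> counter_bound s.+1 (g R0)) ->
  {in upd_rule (rep R0) g (L s), forall R, rep R = r -> counter_bound s.+1 R}.
Proof.
move=> bound_s R0_in rep_g bound_g; have [_ _ uniq_rep] := run_wf run s.
apply: upd_rule_ind => R R_in; first by move=> _ /(bound_s R R_in) /counter_bound_succ.
move=> eq_rep; rewrite rep_g => rep_r.
by rewrite (uniq_map_inj_in uniq_rep R_in R0_in eq_rep); apply: bound_g; rewrite -eq_rep.
Qed.

Lemma counter_bound_step s :
  {in L s, forall R, rep R = r -> counter_bound s R} ->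
  {in L s.+1, forall R, rep R = r -> counter_bound s.+1 R}.
Proof.
move=> bound_s; have [lab_rep _ _] := run_wf run s.
have bound_old : {in L s, forall R, rep R = r -> counter_bound s.+1 R}.
  by move=> R R_in /(bound_s R R_in) /counter_bound_succ.
move: (run_step run s); move Ee: (ev s.+1) => e; move: (L s.+1) => L' st.
case: st Ee => [R0 _ _ _ _|R0 R0_in _ sat_R0 lab_R0|_ _|_ _ _
               |R0 f _ _ R0_in _ lab_R0 f_in f_false] Ee //.
- apply: counter_bound_upd_rule => // rep_r.
  have bound_R0 := bound_s R0 R0_in rep_r.
  have y_R0 : rlab R0 = y r by rewrite lab_rep // rep_r.
  have upd_r : upd (ev s.+1) = Some r by rewrite Ee rep_r.
  have [v|nv] := boolP (valid_at s.+1); last first.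
    apply: counter_bound_bump_exception => //.
    by case: (_ && _); [exact: count_ucount_cons | lia].
  have [sep_f f_r ph_s] : [/\ separating (neg (ph s.+1)), eval (neg (ph s.+1)) (x r)
                            & eval (ph s.+1) (x s.+1)].
    by apply: valid_mistake_separating; rewrite // Ee //=; apply/eqP.
  have f_notin : neg (ph s.+1) \notin conj R0.
    by apply/negP => /(allP sat_R0); rewrite neg_eval ph_s.
  rewrite rep_r f_r ph_s; apply: counter_bound_bump_valid => //.
  by rewrite ucount_cons_notin //= sep_f; lia.
- by case: (b s.+1) => // R; rewrite mem_rcons inE => /predU1P [->|/bound_old].
- apply: counter_bound_upd_rule => // rep_r.
  have bound_R0 := bound_s R0 R0_in rep_r.
  have [v|nv] := boolP (valid_at s.+1); last first.
    apply: counter_bound_bump_exception => //; first by rewrite Ee rep_r.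
    exact: count_ucount_rem.
  have sep_f : ~~ separating f.
    by apply: (valid_removal_not_separating v) f_false; rewrite -lab_R0 lab_rep // rep_r.
  have bad_pos : 0 < count (predC separating) (conj R0).
    by rewrite -has_count; apply/hasP; exists f.
  apply: counter_bound_bump_valid => //.
  by rewrite ucount_rem_predC // count_rem f_in /= sep_f; lia.
Qed.

Lemma counter_bound_run s : {in L s, forall R, rep R = r -> counter_bound s R}.
Proof. by elim: s => [|s /counter_bound_step //]; case: run => ->. Qed.

Lemma cnt_lt_exc_updates s R : R \in L s -> rep R = r -> cnt R < m + 2 * E s.
Proof.
move=> R_in /(counter_bound_run R_in); rewrite /counter_bound.
by have := ucount_separating_lt (conj R); lia.
Qed.

End CounterBound.

Import Order.TTheory GRing.Theory Num.Theory.
Local Open Scope ring_scope.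

Theorem lemma5
  (* domain, labels, features (closed under negation) *)
  (X : Type) (Y : finType) (F : eqType) (eval : F -> X -> bool) (neg : F -> F)
  (neg_eval : forall f z, eval (neg f) z = ~~ eval f z)
  (* representation of size m: cover by components with labels *)
  (m : nat) (memG : 'I_m -> X -> bool) (G : X -> 'I_m) (lab : 'I_m -> Y)
  (phi : 'I_m -> 'I_m -> F)
  (G_mem : forall z, memG (G z) z)
  (phi_true : forall i j, lab i != lab j -> forall z, memG i z -> eval (phi i j) z)
  (phi_false : forall i j, lab i != lab j -> forall z, memG j z -> ~~ eval (phi i j) z)
  (phi_neg : forall i j, lab i != lab j -> phi j i = neg (phi i j))
  (* each component has a unique label *)
  (lab_inj : injective lab)
  (* algorithm parameters *)
  (p : rat) (p_ge0 : 0 <= p) (p_le1 : p <= 1) (l : nat)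
  (* the stream and a realization of the random bits *)
  (x : nat -> X) (y : nat -> Y) (ph : nat -> F) (b : nat -> bool)
  (b_real : forall s, (b s -> 0 < p) /\ (~~ b s -> p < 1))
  (* a run of the algorithm *)
  (L : nat -> seq (rule F Y)) (ev : nat -> event Y)
  (run : is_run eval neg (m + l - 1) x y ph b L ev)
  (* at most k exceptions *)
  (k : nat)
  (few_exc : forall T, (count (fun s => ~~ valid x y ph G lab phi ev s) (iota 0 T) <= k)%N)
  (* iteration t and a valid rule C[x_r] existing during it *)
  (t r : nat) (t_pos : (0 < t)%N)
  (r_exists : (exists2 R, R \in L t.-1 & (rep R == r) && alive R)
              \/ (r = t /\ exists2 R, R \in L t & rep R == r))
  (r_valid : valid x y ph G lab phi ev r)
  (R : rule F Y) (R_in : R \in L t) (R_rep : rep R = r) :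
  ((cnt R)%:R - (m%:R - 1)) / 2 <= (exc_updates x y ph G lab phi ev r t)%:R :> rat.
Proof.
(* Neither the exception budget k, nor r_exists, nor the random bits matter:
   the bound holds for every rule of L t represented by x_r. *)
have := cnt_lt_exc_updates neg_eval run G_mem phi_true phi_false lab_inj r_valid R_in R_rep.
rewrite -(ler_nat rat) -natr1 natrD natrM => cnt_lt.
by rewrite ler_pdivrMr //; lra.
Qed.
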